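(* Let $Q$ be a non-degenerate quadratic form of signature $(p,p)$ on a real vector space $V$, and let $\mathcal J=\{j\in\mathrm{GL}(V): j^*Q=-Q,\ j^2=\mathrm{Id}\}$. Let $X$ be a complex $\mathrm{GL}(V)$-module and $X^{\mathrm O(Q)}$ its subspace of $\mathrm O(Q)$-invariant vectors. For $j\in\mathcal J$, $j$ preserves $X^{\mathrm O(Q)}$, and one has $X^{\mathrm O(Q)}=X^{\mathrm O(Q),j}\oplus X^{\mathrm O(Q),-j}$ with $X^{\mathrm O(Q),\pm j}=\{v\in X^{\mathrm O(Q)}: jv=\pm v\}$. This decomposition is independent of the choice of $j\in\mathcal J$.
   Context: $j^*Q$ denotes the form $x\mapsto Q(jx)$. *)

From HB Require Import structures.
From mathcomp Require Import all_boot all_order all_algebra.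
Set Implicit Arguments. Unset Strict Implicit. Unset Printing Implicit Defensive.
Import Order.TTheory GRing.Theory Num.Theory.
Local Open Scope ring_scope.

(* V = column vectors 'cV[R]_n ; a linear map g acts by x |-> g *m x.
   A quadratic form is given by its (symmetric) Gram matrix B:
   Q(x) = x^T B x. *)
Definition qform (R : realFieldType) (n : nat) (B : 'M[R]_n) (x : 'cV[R]_n) : R :=
  (x^T *m B *m x) 0 0.

Definition sig_mx (R : realFieldType) (p q : nat) : 'M[R]_(p + q) :=
  diag_mx (row_mx (const_mx 1) (const_mx (-1))).

(* Q (Gram matrix B, symmetric) is non-degenerate of signature (p,q):
   in some basis it is diag(1,..,1,-1,..,-1) (Sylvester normal form). *)
Definition nondeg_signature (R : realFieldType) (p q : nat) (B : 'M[R]_(p + q)) : Prop :=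
  B^T = B /\ exists P : 'M[R]_(p + q), P \in unitmx /\ P^T *m B *m P = sig_mx R p q.

Definition in_OQ (R : realFieldType) (n : nat) (B : 'M[R]_n) (g : 'M[R]_n) : Prop :=
  g \in unitmx /\ forall x, qform B (g *m x) = qform B x.

Definition in_J (R : realFieldType) (n : nat) (B : 'M[R]_n) (j : 'M[R]_n) : Prop :=
  j \in unitmx /\ (forall x, qform B (j *m x) = - qform B x) /\ j *m j = 1%:M.

Definition is_GL_rep (R : realFieldType) (n : nat) (K : fieldType) (X : lmodType K)
    (rho : 'M[R]_n -> {linear X -> X}) : Prop :=
  (forall v, rho 1%:M v = v) /\
  (forall g h, g \in unitmx -> h \in unitmx -> forall v, rho (g *m h) v = rho g (rho h v)).

Definition OQ_invariant (R : realFieldType) (n : nat) (K : fieldType) (X : lmodType K)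
    (B : 'M[R]_n) (rho : 'M[R]_n -> {linear X -> X}) (v : X) : Prop :=
  forall g, in_OQ B g -> rho g v = v.

From HB Require Import structures.
From mathcomp Require Import all_boot all_order all_algebra.
Import Order.TTheory GRing.Theory Num.Theory.
Set Implicit Arguments. Unset Strict Implicit. Unset Printing Implicit Defensive.
Local Open Scope ring_scope.

(* Since j^2 = 1 and j^*Q = -Q, conjugation by j preserves O(Q), and any two
   elements of J differ by an element of O(Q): j' j is in O(Q).  Hence j acts
   on X^{O(Q)} by an involution, which is the same for every j in J, and an
   involution splits a vector space into its (+1) and (-1) eigenspaces as soon
   as 2 is invertible. *)

Section Involution.
Variables (K : fieldType) (X : lmodType K) (f : {linear X -> X}).
Hypothesis two_neq0 : (2 : K) != 0.

Lemma add_halves (v w : X) : v = 2^-1 *: (v + w) + 2^-1 *: (v - w).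
Proof.
rewrite -scalerDr addrACA subrr addr0 -mulr2n -scaler_nat scalerA.
by rewrite mulVf // scale1r.
Qed.

Lemma eigen_opp_eq0 (v : X) : f v = v -> f v = - v -> v = 0.
Proof.
move=> fv fvN; have : v *+ 2 = 0 by rewrite mulr2n -{1}fv fvN addNr.
by rewrite -scaler_nat => /eqP; rewrite scaler_eq0 (negPf two_neq0) => /eqP.
Qed.

Hypothesis f_invol : involutive f.

Lemma involution_half_add (v : X) : f (2^-1 *: (v + f v)) = 2^-1 *: (v + f v).
Proof. by rewrite linearZ linearD /= f_invol addrC. Qed.

Lemma involution_half_sub (v : X) : f (2^-1 *: (v - f v)) = - (2^-1 *: (v - f v)).
Proof. by rewrite linearZ linearB /= f_invol -scalerN opprB. Qed.

End Involution.

Section JandOQ.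
Variables (R : realFieldType) (n : nat) (B : 'M[R]_n).

Lemma in_J_mul_OQ (j j' : 'M[R]_n) : in_J B j -> in_J B j' -> in_OQ B (j' *m j).
Proof.
move=> [ju [jQ _]] [j'u [j'Q _]]; split; first by rewrite unitmx_mul j'u ju.
by move=> x; rewrite -mulmxA j'Q jQ opprK.
Qed.

Lemma in_J_conj_OQ (j g : 'M[R]_n) : in_J B j -> in_OQ B g -> in_OQ B (j *m (g *m j)).
Proof.
move=> [ju [jQ _]] [gu gQ]; split; first by rewrite !unitmx_mul ju gu.
by move=> x; rewrite -!mulmxA jQ gQ jQ opprK.
Qed.

End JandOQ.

Section Representation.
Variables (R : realFieldType) (n : nat) (B : 'M[R]_n).
Variables (K : fieldType) (X : lmodType K) (rho : 'M[R]_n -> {linear X -> X}).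
Hypothesis rho_rep : is_GL_rep rho.

Let invariant := OQ_invariant B rho.

Lemma OQ_invariant_lin (a b : K) (u w : X) :
  invariant u -> invariant w -> invariant (a *: u + b *: w).
Proof. by move=> Hu Hw g Hg; rewrite linearD !linearZ /= Hu // Hw. Qed.

Lemma rep_J_involutive (j : 'M[R]_n) : in_J B j -> involutive (rho j).
Proof.
case: rho_rep => rho1 rhoM [ju [_ jj]] v.
by rewrite -rhoM // jj rho1.
Qed.

Lemma OQ_invariant_J (j : 'M[R]_n) (v : X) :
  in_J B j -> invariant v -> invariant (rho j v).
Proof.
move=> Jj Hv g OQg; have [ju _] := Jj; have [gu _] := OQg.
have [_ rhoM] := rho_rep.
have conj : rho j (rho g (rho j v)) = rho (j *m (g *m j)) v.
  by rewrite rhoM ?unitmx_mul ?gu ?ju // rhoM.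
by rewrite -{1}(rep_J_involutive Jj (rho g (rho j v))) conj Hv //; apply: in_J_conj_OQ.
Qed.

Lemma rep_J_invariant_eq (j j' : 'M[R]_n) (v : X) :
  in_J B j -> in_J B j' -> invariant v -> rho j' v = rho j v.
Proof.
move=> Jj Jj' Hv; have [ju _] := Jj; have [j'u _] := Jj'.
have [_ rhoM] := rho_rep.
rewrite -{1}(rep_J_involutive Jj v) -rhoM //.
by rewrite (OQ_invariant_J Jj Hv) //; apply: in_J_mul_OQ.
Qed.

End Representation.

Theorem mainTheorem8 (R : realFieldType) (p : nat) (B : 'M[R]_(p + p))
    (K : numClosedFieldType) (X : lmodType K) (rho : 'M[R]_(p + p) -> {linear X -> X}) :
  @nondeg_signature R p p B ->
  is_GL_rep rho ->
  (forall j, in_J B j ->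
     (* j preserves X^{O(Q)} *)
     (forall v, OQ_invariant B rho v -> OQ_invariant B rho (rho j v)) /\
     (* X^{O(Q)} = X^{O(Q),j} + X^{O(Q),-j} *)
     (forall v, OQ_invariant B rho v ->
        exists v1 v2, [/\ OQ_invariant B rho v1, rho j v1 = v1,
                          OQ_invariant B rho v2, rho j v2 = - v2 & v = v1 + v2]) /\
     (* the sum is direct *)
     (forall v, OQ_invariant B rho v -> rho j v = v -> rho j v = - v -> v = 0)) /\
  (* independence of the choice of j *)
  (forall j j', in_J B j -> in_J B j' ->
     forall v, OQ_invariant B rho v ->
       (rho j v = v <-> rho j' v = v) /\ (rho j v = - v <-> rho j' v = - v)).
Proof.
move=> _ rho_rep; have two_neq0 : (2 : K) != 0 by rewrite pnatr_eq0.
split=> [j Jj | j j' Jj Jj' v Hv]; last by rewrite (rep_J_invariant_eq rho_rep Jj Jj' Hv).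
have jinvol := rep_J_involutive rho_rep Jj.
split; first by move=> v; apply: OQ_invariant_J.
split=> [v Hv | v _]; last exact: eigen_opp_eq0.
have Hjv := OQ_invariant_J rho_rep Jj Hv.
exists (2^-1 *: (v + rho j v)), (2^-1 *: (v - rho j v)); split.
- by rewrite scalerDr; apply: OQ_invariant_lin.
- exact: involution_half_add.
- by rewrite scalerDr scalerN -scaleNr; apply: OQ_invariant_lin.
- exact: involution_half_sub.
- exact: add_halves.
Qed.
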